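(* In the ring $S$ (defined in the context), for every triple $(a,b,c)\neq(0,0,0)$ of nonnegative integers and every finite multiset $\Lambda$ of triples, we have \begin{align*} \bar m_{(a,b,c)}\bar m_{\Lambda}=&(u_{(a,b,c)}+1)\bar m_{(a,b,c)\Lambda}+\sum_{\substack{u_{(i,j,k)}>0\\ c+k\leq r-1}}(u_{(a+i,b+j,c+k)}+1)\bar m_{(a+i,b+j,c+k)\Lambda-(i,j,k)}\\ &+\sum_{\substack{u_{(i,j,k)}>0\\ c+k\geq r}}(u_{(a+i+1,b+j+1,c+k-r)}+1)\bar m_{(a+i+1,b+j+1,c+k-r)\Lambda-(i,j,k)}, \end{align*} where $u_{(i,j,k)}$ denotes the multiplicity of $(i,j,k)$ in $\Lambda$ and the sums run over the distinct triples $(i,j,k)$ occurring in $\Lambda$.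
   Context: Fix $r\geq1$. For $n\geq1$ let $R_n=\mathbb{C}[x_1,\dots,x_n,y_1,\dots,y_n,z_1,\dots,z_n]$ with $S_n$ permuting indices simultaneously, $I_n=(x_iy_i-z_i^r)_{i=1}^n$, $I_n^{S_n}=I_n\cap R_n^{S_n}$. The maps $R_{n+1}^{S_{n+1}}\to R_n^{S_n}$ set $x_{n+1}=y_{n+1}=z_{n+1}=0$; let $S'=\varprojlim R_n^{S_n}$ and $S=\varprojlim R_n^{S_n}/I_n^{S_n}$ (graded projective limits). For a finite multiset $\Lambda=(a_1,b_1,c_1)\cdots(a_l,b_l,c_l)$ of triples of nonnegative integers, none equal to $(0,0,0)$, $m_\Lambda\in S'$ is the element whose image in $R_n^{S_n}$ is the sum of all distinct monomials obtained from $x_1^{a_1}y_1^{b_1}z_1^{c_1}\cdots x_l^{a_l}y_l^{b_l}z_l^{c_l}$ by permuting indices (zero if $l>n$), and $\bar m_\Lambda$ is its image in $S$. Write $l(\Lambda)=l$, $(a,b,c)\Lambda$ for the multiset with $(a,b,c)$ added, and $\Lambda-(i,j,k)$ for the multiset with one copy of $(i,j,k)$ removed. *)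

From HB Require Import structures.
From mathcomp Require Import all_boot all_algebra fingroup perm.
From mathcomp Require Import reals.
From mathcomp Require Import complex.
From mathcomp Require Import mpoly.
Set Implicit Arguments. Unset Strict Implicit. Unset Printing Implicit Defensive.
Import GRing.Theory.
Local Open Scope ring_scope.

(* triples (a,b,c) are encoded as ((a,b),c) : nat * nat * nat *)
Notation triple := (nat * nat * nat)%type.

(* R_n = C[x_1..x_n, y_1..y_n, z_1..z_n] is {mpoly R[i][3*n]}, with
   x_i = 'X_(i), y_i = 'X_(n+i), z_i = 'X_(2n+i) (0-based i < n). *)
Lemma varidx_proof (n : nat) (k : 'I_3) (i : 'I_n) : (k * n + i < 3 * n)%N.
Proof.
case: k => k /= hk; case: i => i /= hi.
have h1 : (k * n + i < k * n + n)%N by rewrite ltn_add2l.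
apply: (leq_trans h1).
have -> : (k * n + n = k.+1 * n)%N by rewrite mulSn addnC.
by rewrite leq_mul2r hk orbT.
Qed.

Definition varidx (n : nat) (k : 'I_3) (i : 'I_n) : 'I_(3 * n) :=
  Ordinal (varidx_proof k i).

Section Ring.
Variable R : realType.
Local Notation C := (R[i]).

Definition xv (n : nat) (i : 'I_n) : {mpoly C[3 * n]} := 'X_(varidx (0 : 'I_3) i).
Definition yv (n : nat) (i : 'I_n) : {mpoly C[3 * n]} := 'X_(varidx (1 : 'I_3) i).
Definition zv (n : nat) (i : 'I_n) : {mpoly C[3 * n]} := 'X_(varidx (2 : 'I_3) i).

Definition permmono (n : nat) (L : seq triple) (s : 'S_n) : {mpoly C[3 * n]} :=
  \prod_(t < n | (t < size L)%N)
     (xv (s t) ^+ (nth (0,0,0)%N L t).1.1 *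
      yv (s t) ^+ (nth (0,0,0)%N L t).1.2 *
      zv (s t) ^+ (nth (0,0,0)%N L t).2).

(* image of m_L in R_n^{S_n}: sum of all distinct monomials obtained by
   permuting indices; zero if l(L) > n *)
Definition mLam (n : nat) (L : seq triple) : {mpoly C[3 * n]} :=
  if (size L <= n)%N then
    \sum_(p <- undup [seq permmono L s | s : 'S_n]) p
  else 0.

Definition in_In (r n : nat) (p : {mpoly C[3 * n]}) : Prop :=
  exists q : 'I_n -> {mpoly C[3 * n]},
    p = \sum_(i < n) q i * (xv i * yv i - zv i ^+ r).

End Ring.
Arguments mLam R n L : clear implicits.

From HB Require Import structures.
From mathcomp Require Import all_boot all_algebra fingroup perm.
From mathcomp Require Import reals.
From mathcomp Require Import complex.
From mathcomp Require Import mpoly.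
From mathcomp Require Import ring zify.

(* Identify the monomials of R_n with labellings f : 'I_n -> N^3, the label
   (a, b, c) at i standing for x_i^a y_i^b z_i^c.  The image of m_Lambda in R_n
   is the sum of the monomials of all labellings whose multiset of labels is
   Lambda padded with zeros to length n.  Multiplying by m_alpha = sum_j x_j^alpha
   adds alpha to one label; grouping the pairs (f, j) by the old label
   lambda = f j, replacing the label at j by alpha + lambda is a bijection onto
   the pairs (g, j) with g of type (alpha + lambda)(Lambda - lambda) and
   g j = alpha + lambda, and each such g has u_(alpha + lambda) + 1 such j.
   When the new z-exponent reaches r, the monomial is congruent modulo I_n to
   the one with x_j y_j in place of z_j^r. *)

Set Implicit Arguments. Unset Strict Implicit. Unset Printing Implicit Defensive.
Import GRing.Theory.
Local Open Scope ring_scope.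

Local Notation zero3 := ((0, 0, 0)%N : triple).

Section Labellings.
Variable n : nat.
Local Notation labelling := {ffun 'I_n -> triple}.

Definition relabel (f : labelling) (j : 'I_n) (t : triple) : labelling :=
  [ffun i => if i == j then t else f i].

Definition perm_labelling (P : seq triple) (s : 'S_n) : labelling :=
  [ffun i => nth zero3 P (s^-1 i)%g].

(* The filter keeps everything when size P = n and nothing otherwise. *)
Definition labellings (P : seq triple) : seq labelling :=
  [seq f : labelling <- undup [seq perm_labelling P s | s <- enum {perm 'I_n}]
     | perm_eq (codom f) P].

Lemma mem_labellings P (f : labelling) : (f \in labellings P) = perm_eq (codom f) P.
Proof.
rewrite mem_filter; have [fP /=|//] := boolP (perm_eq _ _).
rewrite mem_undup; apply/mapP.
have /tuple_permP[s Ps] : perm_eq P [tuple f i | i < n].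
  by rewrite perm_sym codomE -val_ord_tuple in fP.
exists s; first by rewrite mem_enum.
apply/ffunP => i; rewrite ffunE Ps.
by rewrite nth_mktuple permKV tnth_mktuple.
Qed.

Lemma uniq_labellings P : uniq (labellings P).
Proof. by rewrite filter_uniq ?undup_uniq. Qed.

Lemma codom_relabel (f : labelling) j l Q b : perm_eq (codom f) (l :: Q) -> f j = l ->
  perm_eq (codom (relabel f j b)) (b :: Q).
Proof.
move=> fP fj; have enum_j := perm_to_rem (mem_enum 'I_n j).
have relabel_rem : [seq relabel f j b i | i <- rem j (enum 'I_n)] =
                   [seq f i | i <- rem j (enum 'I_n)].
  apply/eq_in_map => i; rewrite mem_rem_uniq ?enum_uniq // inE => /andP[/negbTE ij _].
  by rewrite ffunE ij.
rewrite codomE (permPl (perm_map _ enum_j)) /= ffunE eqxx perm_cons relabel_rem.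
by rewrite -(perm_cons l) -(permPr fP) -fj perm_sym codomE (perm_map f enum_j).
Qed.

Definition marked (P : seq triple) (l : triple) : seq (labelling * 'I_n) :=
  [seq (f, j) | f : labelling <- labellings P, j <- [seq j <- enum 'I_n | f j == l]].

Lemma mem_marked P l (f : labelling) j :
  ((f, j) \in marked P l) = perm_eq (codom f) P && (f j == l).
Proof.
apply/allpairsPdep/andP => [[f' [j' [+ + [-> ->]]]]|[fP fj]].
  by rewrite mem_labellings mem_filter => -> /andP[-> _].
by exists f, j; rewrite mem_labellings mem_filter fj mem_enum.
Qed.

Lemma uniq_marked P l : uniq (marked P l).
Proof.
apply: allpairs_uniq_dep => [||[f1 j1] [f2 j2] _ _ /= [-> ->] //].
  exact: uniq_labellings.
by move=> f _; rewrite filter_uniq ?enum_uniq.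
Qed.

Lemma sum_marked (V : nmodType) P l (G : labelling -> 'I_n -> V) :
  \sum_(f <- labellings P) \sum_(j | f j == l) G f j = \sum_(p <- marked P l) G p.1 p.2.
Proof.
by rewrite big_allpairs_dep; apply: eq_bigr => f _; rewrite big_filter big_enum_cond.
Qed.

Lemma sum_marked_fst (V : nmodType) P l (F : labelling -> V) :
  \sum_(p <- marked P l) F p.1 = (\sum_(f <- labellings P) F f) *+ count_mem l P.
Proof.
rewrite big_allpairs_dep -sumrMnl; apply: eq_big_seq => f; rewrite mem_labellings.
move=> /seq.permP/(_ (pred1 l)) <-.
rewrite codomE count_map (eq_bigr (fun=> F f)) //.
by rewrite big_const_seq iter_addr_0 count_predT size_filter.
Qed.

Lemma marked_relabel P Q l b : perm_eq P (l :: Q) -> b != l ->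
  perm_eq [seq (relabel p.1 p.2 b, p.2) | p <- marked P l] (marked (b :: Q) b).
Proof.
move=> PQ bl; apply: uniq_perm; rewrite ?uniq_marked //.
  rewrite map_inj_in_uniq ?uniq_marked // => -[f1 j1] [f2 j2] + + /= [f12 j12].
  subst j2; rewrite !mem_marked => /andP[_ /eqP f1j] /andP[_ /eqP f2j].
  congr (_, _); apply/ffunP => i.
  have := congr1 (fun g : labelling => g i) f12; rewrite !ffunE.
  by case: eqP => [-> _|//]; rewrite f1j f2j.
move=> [g j]; apply/mapP/idP => [[[f j'] fj' [-> ->]]|].
  rewrite mem_marked in fj'; case/andP: fj' => fP /eqP fj'.
  rewrite mem_marked ffunE !eqxx andbT.
  by apply: codom_relabel fj'; rewrite -(permPr PQ).
rewrite mem_marked => /andP[gP /eqP gj].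
exists (relabel g j l, j).
  by rewrite mem_marked ffunE !eqxx andbT (permPr PQ) (codom_relabel _ gP gj).
by congr (_, _); apply/ffunP => i; rewrite !ffunE; case: eqP => [->|].
Qed.

Lemma sum_relabel (V : nmodType) (F : labelling -> V) P Q l b :
  perm_eq P (l :: Q) -> b != l ->
  \sum_(f <- labellings P) \sum_(j | f j == l) F (relabel f j b)
  = (\sum_(g <- labellings (b :: Q)) F g) *+ count_mem b (b :: Q).
Proof.
move=> PQ bl; rewrite sum_marked -sum_marked_fst.
by rewrite -(perm_big _ (marked_relabel PQ bl)) big_map.
Qed.

Lemma sum_relabel_absent (V : nmodType) (G : labelling -> 'I_n -> V) P l :
  l \notin P -> \sum_(f <- labellings P) \sum_(j | f j == l) G f j = 0.
Proof.
move=> lP; rewrite big_seq big1 // => f; rewrite mem_labellings => fP.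
rewrite big1 // => j /eqP fj; case/negP: lP.
by rewrite -(perm_mem fP) -fj codom_f.
Qed.

Lemma sum_by_label (V : nmodType) (f : labelling) (Vs : seq triple) (H : 'I_n -> V) :
  uniq Vs -> (forall j, f j \in Vs) ->
  \sum_j H j = \sum_(l <- Vs) \sum_(j | f j == l) H j.
Proof.
move=> Vs_uniq f_Vs; rewrite (exchange_big_dep xpredT) //=; apply: eq_bigr => j _.
rewrite big_mkcond (bigD1_seq (f j)) //= eqxx big1 ?addr0 // => l /negbTE.
by rewrite eq_sym => ->.
Qed.

Definition pad (L : seq triple) := L ++ nseq (n - size L) zero3.

Lemma nth_pad L i : nth zero3 (pad L) i = nth zero3 L i.
Proof.
rewrite nth_cat; case: ltnP => // Li.
by rewrite nth_nseq nth_default //; case: ifP.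
Qed.

Lemma codom_perm_labelling P s : size P = n -> perm_eq (codom (perm_labelling P s)) P.
Proof.
move=> Pn; have -> : codom (perm_labelling P s) =
    [seq nth zero3 P (val i) | i <- [seq (s^-1)%g i | i <- enum 'I_n]].
  by rewrite codomE -[RHS]map_comp; apply: eq_map => i; rewrite /= ffunE.
rewrite -[X in perm_eq _ X](mkseq_nth zero3) /mkseq Pn -val_enum_ord -map_comp.
apply: perm_map; apply: uniq_perm; rewrite ?enum_uniq //.
  by rewrite map_inj_uniq ?enum_uniq //; apply: perm_inj.
by move=> i; rewrite mem_enum; apply/mapP; exists (s i); rewrite ?mem_enum ?permK.
Qed.

Lemma labellings_nseq0 : labellings (nseq n zero3) = [:: [ffun=> zero3]].
Proof.
apply: perm_small_eq => //; apply: uniq_perm; rewrite ?uniq_labellings // => f.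
rewrite mem_labellings inE; apply/idP/eqP => [fP|->].
  apply/ffunP => i; rewrite ffunE.
  by have := codom_f f i; rewrite (perm_mem fP) mem_nseq => /andP[_ /eqP].
suff /all_pred1P : all (pred1 zero3) (codom ([ffun=> zero3] : labelling)).
  by rewrite size_codom card_ord => ->.
by apply/allP => _ /codomP[i ->]; rewrite ffunE.
Qed.

End Labellings.

Lemma eq_varidx n (k k' : 'I_3) (i j : 'I_n) :
  (varidx k i == varidx k' j) = (k == k') && (i == j).
Proof.
apply/eqP/andP => [/(congr1 val) /= kij|[/eqP -> /eqP -> //]].
have n_gt0 : (0 < n)%N by case: i {kij} => i /= /(leq_ltn_trans (leq0n i)).
have := congr1 (modn^~ n) kij; have := congr1 (divn^~ n) kij.
rewrite /= !modnMDl !modn_small // !divnMDl // !divn_small // !addn0.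
by move=> kk' ij; split; apply/eqP/val_inj.
Qed.

Definition tadd (s t : triple) : triple := (s.1.1 + t.1.1, s.1.2 + t.1.2, s.2 + t.2)%N.

Definition reduce (r : nat) (t : triple) : triple := (t.1.1 + 1, t.1.2 + 1, t.2 - r)%N.

Lemma tadd_neq s t : s != zero3 -> tadd s t != t.
Proof.
case: s t => [[a b] c] [[p q] u] /eqP s0; apply/eqP => -[ha hb hc].
by apply: s0; congr (_, _, _); lia.
Qed.

Lemma tadd_neq0 s t : s != zero3 -> tadd s t != zero3.
Proof.
case: s t => [[a b] c] [[p q] u] /eqP s0; apply/eqP => -[ha hb hc].
by apply: s0; congr (_, _, _); lia.
Qed.

Lemma reduce_tadd_neq r s t : reduce r (tadd s t) != t.
Proof. by case: s t => [[a b] c] [[p q] u]; apply/eqP => -[]; lia. Qed.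

Lemma reduce_neq0 r t : reduce r t != zero3.
Proof. by case: t => [[p q] u]; apply/eqP => -[]; lia. Qed.

Section Monomials.
Variables (R : realType) (n : nat).
Local Notation poly := {mpoly R[i][3 * n]}.
Local Notation labelling := {ffun 'I_n -> triple}.

Definition var_mono (j : 'I_n) (t : triple) : poly :=
  xv R j ^+ t.1.1 * yv R j ^+ t.1.2 * zv R j ^+ t.2.

Definition mono (f : labelling) : poly := \prod_i var_mono i (f i).

Definition mono_exp (f : labelling) : 'X_{1.. 3 * n} :=
  (\sum_i (U_(varidx (0 : 'I_3)%R i) *+ (f i).1.1
           + U_(varidx (1 : 'I_3)%R i) *+ (f i).1.2
           + U_(varidx (2 : 'I_3)%R i) *+ (f i).2))%MM.

Lemma mono_X f : mono f = 'X_[mono_exp f].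
Proof.
rewrite /mono_exp (big_morph (fun m => 'X_[m] : poly) (@mpolyXD _ _) (@mpolyX0 _ _)).
by apply: eq_bigr => i _; rewrite !mpolyXD -!mpolyXn.
Qed.

Lemma mono_expE f (k : 'I_3) j : mono_exp f (varidx k j) =
  ((k == 0%R) * (f j).1.1 + (k == 1%R) * (f j).1.2 + (k == 2%R) * (f j).2)%N.
Proof.
rewrite /mono_exp mnm_sumE (bigD1 j) //= big1 => [|i ij].
  by rewrite !mnmDE !mulmnE !mnm1E !eq_varidx eqxx !andbT addn0 ![_ == k]eq_sym.
by rewrite !mnmDE !mulmnE !mnm1E !eq_varidx (negbTE ij) !andbF.
Qed.

Lemma mono_inj : injective mono.
Proof.
move=> f g; rewrite !mono_X => fg.
have {}fg : mono_exp f = mono_exp g.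
  have := congr1 (mcoeff (mono_exp f)) fg; rewrite !mcoeffX eqxx.
  by case: eqP => // _ /eqP; rewrite oner_eq0.
apply/ffunP => j; have exp_j k := congr1 (fun m : 'X_{1.. 3 * n} => m (varidx k j)) fg.
move: (exp_j 0) (exp_j 1) (exp_j 2); rewrite /= !mono_expE /=.
case: (f j) (g j) => [[? ?] ?] [[? ?] ?] /=.
by rewrite !mul1n !mul0n ?addn0 ?add0n => -> -> ->.
Qed.

Lemma var_mono0 j : var_mono j zero3 = 1.
Proof. by rewrite /var_mono !expr0 !mulr1. Qed.

Lemma var_monoD j s t : var_mono j (tadd s t) = var_mono j s * var_mono j t.
Proof. by rewrite /var_mono !exprD; ring. Qed.

Lemma mono_relabel f j t :
  mono (relabel f j t) = var_mono j t * \prod_(i | i != j) var_mono i (f i).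
Proof.
rewrite /mono (bigD1 j) //= ffunE eqxx; congr (_ * _).
by apply: eq_bigr => i /negbTE ij; rewrite ffunE ij.
Qed.

Lemma var_mono_mul f j s : var_mono j s * mono f = mono (relabel f j (tadd s (f j))).
Proof. by rewrite mono_relabel var_monoD /mono (bigD1 j) //= mulrA. Qed.

Lemma permmono_perm_labelling L s : permmono R L s = mono (perm_labelling (pad n L) s).
Proof.
rewrite /mono (reindex_inj (@perm_inj _ s)) /permmono big_mkcond /=.
apply: eq_bigr => t _; rewrite ffunE permK nth_pad.
by case: ltnP => // Lt; rewrite nth_default // var_mono0.
Qed.

Lemma mLam_labellings L : mLam R n L = \sum_(f <- labellings n (pad n L)) mono f.
Proof.
rewrite /mLam; case: ifP => Ln.
  have -> : [seq permmono R L s | s : 'S_n] =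
            [seq mono f | f <- [seq perm_labelling (pad n L) s | s <- enum {perm 'I_n}]].
    by rewrite -map_comp; apply: eq_map => s; exact: permmono_perm_labelling.
  rewrite (undup_map_inj mono_inj) big_map /labellings (all_filterP _) //.
  apply/allP => f; rewrite mem_undup => /mapP[s _ ->]; apply: codom_perm_labelling.
  by rewrite size_cat size_nseq subnKC.
move/negbT: Ln; rewrite -ltnNge => nL.
have /eqP pad0 : (n - size L == 0)%N by rewrite subn_eq0 ltnW.
rewrite big_seq big1 // => f; rewrite mem_labellings => /perm_size.
by rewrite size_codom card_ord size_cat pad0 addn0 => nLe; rewrite nLe ltnn in nL.
Qed.

Definition relabel_sum (L : seq triple) (l b : triple) : poly :=
  \sum_(f <- labellings n (pad n L)) \sum_(j | f j == l) mono (relabel f j b).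

Lemma relabel_sum_mem L l b : l \in L -> b != l -> b != zero3 ->
  relabel_sum L l b = (count_mem b L).+1%:R * mLam R n (b :: rem l L).
Proof.
move=> lL bl b0; have L_rem := perm_to_rem lL.
have size_rem : (size (rem l L)).+1 = size L by rewrite (perm_size L_rem).
set Q := rem l L ++ nseq (n - size L) zero3.
have padQ : perm_eq (pad n L) (l :: Q) by rewrite -cat_cons perm_cat2r.
rewrite /relabel_sum (sum_relabel mono padQ bl) mulr_natl mLam_labellings /pad /=.
rewrite size_rem; congr (_ *+ _).
rewrite /= eqxx count_cat count_nseq /= eq_sym (negbTE b0) mul0n addn0.
by rewrite (seq.permP L_rem) /= eq_sym (negbTE bl).
Qed.

Lemma relabel_sum_zero L b : zero3 \notin L -> b != zero3 ->
  relabel_sum L zero3 b = (count_mem b L).+1%:R * mLam R n (b :: L).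
Proof.
move=> L0 b0; have [Ln|nL] := ltnP (size L) n.
  set Q := L ++ nseq (n - size L).-1 zero3.
  have padQ : perm_eq (pad n L) (zero3 :: Q).
    have pad_gt0 : (0 < n - size L)%N by rewrite subn_gt0.
    rewrite /pad /Q -{1}(prednK pad_gt0) /=.
    by rewrite perm_catC /= perm_cons perm_catC.
  rewrite /relabel_sum (sum_relabel mono padQ b0) mulr_natl mLam_labellings /pad /= subnS.
  by rewrite /= eqxx count_cat count_nseq /= eq_sym (negbTE b0) mul0n addn0.
rewrite /relabel_sum sum_relabel_absent; last by rewrite /pad (eqP nL) cats0.
by rewrite /mLam /= ltnNge nL mulr0.
Qed.

Lemma mLam_single s : s != zero3 -> mLam R n [:: s] = \sum_j var_mono j s.
Proof.
move=> s0; have := @relabel_sum_zero [::] s isT s0.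
rewrite mulr_natl /= mulr1n => <-.
rewrite /relabel_sum /pad subn0 labellings_nseq0 big_seq1.
apply: eq_big => [j|j _]; first by rewrite ffunE eqxx.
rewrite mono_relabel big1 ?mulr1 // => i _.
by rewrite ffunE var_mono0.
Qed.

Lemma mLam_single_mul s L : s != zero3 -> zero3 \notin L ->
  mLam R n [:: s] * mLam R n L =
  relabel_sum L zero3 s + \sum_(l <- undup L) relabel_sum L l (tadd s l).
Proof.
move=> s0 L0.
have tadd0 : tadd s zero3 = s by case: s {s0} => [[? ?] ?]; rewrite /tadd /= !addn0.
rewrite [RHS](_ : _ = \sum_(l <- zero3 :: undup L) relabel_sum L l (tadd s l)); last first.
  by rewrite big_cons tadd0.
rewrite /relabel_sum exchange_big /=.
rewrite mLam_single // mLam_labellings mulr_sumr.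
apply: eq_big_seq => f; rewrite mem_labellings => fP.
rewrite mulr_suml (sum_by_label (f := f) (Vs := zero3 :: undup L)).
- by apply: eq_bigr => l _; apply: eq_bigr => j /eqP fj; rewrite var_mono_mul fj.
- by rewrite /= mem_undup L0 undup_uniq.
move=> j; have : f j \in pad n L by rewrite -(perm_mem fP) codom_f.
by rewrite mem_cat mem_nseq !inE mem_undup => /orP[->|/andP[_ ->]]; rewrite ?orbT.
Qed.

Lemma in_In_sum r (I : Type) (s : seq I) (P : pred I) (F : I -> poly) :
  (forall i, P i -> in_In r (F i)) -> in_In r (\sum_(i <- s | P i) F i).
Proof.
move=> FI; apply: big_ind => //.
  by exists (fun=> 0); rewrite big1 // => i _; rewrite mul0r.
move=> _ _ [q1 ->] [q2 ->]; exists (fun i => q1 i + q2 i).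
by rewrite -big_split; apply: eq_bigr => i _; rewrite mulrDl.
Qed.

Lemma in_In_reduce r L l b : (r <= b.2)%N ->
  in_In r (relabel_sum L l b - relabel_sum L l (reduce r b)).
Proof.
case: b => [[p q] u] /= ru; rewrite /relabel_sum -sumrB; apply: in_In_sum => f _.
rewrite -sumrB; apply: in_In_sum => j _; rewrite !mono_relabel.
set K := \prod_(i | i != j) var_mono i (f i).
exists (fun i => if i == j then - (var_mono j (p, q, u - r)%N * K) else 0).
rewrite (bigD1 j) //= eqxx big1 ?addr0 => [|i /negbTE ->]; last by rewrite mul0r.
rewrite /var_mono /= !addn1 !exprS.
have -> : zv R j ^+ u = zv R j ^+ (u - r) * zv R j ^+ r by rewrite -exprD subnK.
ring.
Qed.

Lemma mLam_single_mul_mod r s L : (0 < r)%N -> s != zero3 -> zero3 \notin L ->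
  in_In r (mLam R n [:: s] * mLam R n L
    - ((count_mem s L).+1%:R * mLam R n (s :: L)
       + \sum_(t <- undup L | (s.2 + t.2 <= r - 1)%N)
            (count_mem (tadd s t) L).+1%:R * mLam R n (tadd s t :: rem t L)
       + \sum_(t <- undup L | (r <= s.2 + t.2)%N)
            (count_mem (reduce r (tadd s t)) L).+1%:R
            * mLam R n (reduce r (tadd s t) :: rem t L))).
Proof.
move=> r_gt0 s0 L0.
have low_high (t : triple) : (s.2 + t.2 <= r - 1)%N = ~~ (r <= s.2 + t.2)%N.
  by rewrite -ltnNge -[in RHS](prednK r_gt0) ltnS subn1.
rewrite mLam_single_mul // relabel_sum_zero // (bigID (fun t => r <= s.2 + t.2)%N) /=.
have -> : \sum_(t <- undup L | ~~ (r <= s.2 + t.2)%N) relabel_sum L t (tadd s t) =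
          \sum_(t <- undup L | (s.2 + t.2 <= r - 1)%N)
             (count_mem (tadd s t) L).+1%:R * mLam R n (tadd s t :: rem t L).
  rewrite big_seq_cond [RHS]big_seq_cond; apply: eq_big => [t|t /andP[tL _]].
    by rewrite low_high.
  by rewrite mem_undup in tL; rewrite relabel_sum_mem ?tadd_neq ?tadd_neq0.
have -> : \sum_(t <- undup L | (r <= s.2 + t.2)%N) relabel_sum L t (tadd s t) =
          \sum_(t <- undup L | (r <= s.2 + t.2)%N)
             (relabel_sum L t (tadd s t) - relabel_sum L t (reduce r (tadd s t)))
        + \sum_(t <- undup L | (r <= s.2 + t.2)%N)
             (count_mem (reduce r (tadd s t)) L).+1%:R
             * mLam R n (reduce r (tadd s t) :: rem t L).
  rewrite -big_split [LHS]big_seq_cond [RHS]big_seq_cond.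
  apply: eq_bigr => t /andP[tL _] /=.
  rewrite mem_undup in tL.
  by rewrite (relabel_sum_mem (b := reduce r _)) ?reduce_tadd_neq ?reduce_neq0 ?subrK.
rewrite (_ : forall x y z w : poly, x + (y + w + z) - (x + z + w) = y); last by move=> *; ring.
by apply: in_In_sum => t rt; apply: in_In_reduce.
Qed.

End Monomials.

Theorem lemma1 (R : realType) (r a b c : nat) (L : seq triple) :
  (0 < r)%N ->
  (a, b, c) != (0, 0, 0)%N ->
  (0, 0, 0)%N \notin L ->
  forall n : nat, (0 < n)%N ->
  in_In r
    (mLam R n [:: (a, b, c)] * mLam R n L
     - ( (count_mem (a, b, c) L).+1%:R * mLam R n ((a, b, c) :: L)
       + \sum_(t <- undup L | (c + t.2 <= r - 1)%N)
            (count_mem (a + t.1.1, b + t.1.2, c + t.2)%N L).+1%:R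
            * mLam R n ((a + t.1.1, b + t.1.2, c + t.2)%N :: rem t L)
       + \sum_(t <- undup L | (r <= c + t.2)%N)
            (count_mem (a + t.1.1 + 1, b + t.1.2 + 1, c + t.2 - r)%N L).+1%:R
            * mLam R n ((a + t.1.1 + 1, b + t.1.2 + 1, c + t.2 - r)%N :: rem t L))).
Proof.
by move=> r_gt0 abc0 L0 n _; apply: mLam_single_mul_mod.
Qed.
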